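(* Let $n$ be a positive integer and $k$ an integer with $0\le k\le n$. Then $$e_k\left(\left\{\sin^2\left(\tfrac{(2j-1)\pi}{4n}\right) : j=1,\dots,n\right\}\right) = \frac{2n\,4^{-k}(2n-k-1)!}{k!\,(2n-2k)!}.$$
   Context: $e_k(\alpha_1,\dots,\alpha_n)$ denotes the degree-$k$ elementary symmetric function of $\alpha_1,\dots,\alpha_n$ (with $e_0=1$). *)

From HB Require Import structures.
From mathcomp Require Import all_boot all_order all_algebra.
From mathcomp Require Import all_classical all_reals all_analysis.
Set Implicit Arguments. Unset Strict Implicit. Unset Printing Implicit Defensive.
Import Order.TTheory GRing.Theory Num.Theory.
Local Open Scope ring_scope.

Definition elem_sym (R : comRingType) (n k : nat) (a : 'I_n -> R) : R :=
  \sum_(A : {set 'I_n} | #|A| == k) \prod_(i in A) a i.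

From mathcomp Require Import all_boot all_order all_algebra.
From mathcomp Require Import all_classical all_reals all_analysis.
From mathcomp Require Import ring lra zify.
Set Implicit Arguments. Unset Strict Implicit. Unset Printing Implicit Defensive.
Import Order.TTheory GRing.Theory Num.Theory.
Local Open Scope ring_scope.

(* Put y = sin^2 x.  The three-term recurrence for cos((2m-1)x) shows that
   cos((2m-1)x) = P_m(y) cos x, where P_m = cos_odd_poly m has coefficients
   (-4)^j C(m+j-1, 2j).  Hence T = P_(n+1) + P_n = cos_even_poly n satisfies
   T(y) cos x = 2 cos(2nx) cos x, so the n distinct numbers
   sin^2((2j-1)pi/(4n)) are all the roots of T, which has degree n and leading
   coefficient (-4)^n.  Vieta's formulas give e_k as (-1)^k times the
   coefficient of y^(n-k) over (-4)^n, and the closed form follows from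
   (C(a+b, a) + C(a+b-1, a)) a! b! = (a+2b) (a+b-1)!. *)

Lemma elem_sym_cast (R : comNzRingType) m n (e : m = n) (a : 'I_n -> R) k :
  elem_sym k (a \o cast_ord e) = elem_sym k a.
Proof.
case: n / e in a *.
by apply: eq_bigr => I _; apply: eq_bigr => i _; rewrite /= cast_ord_id.
Qed.

Lemma elem_sym_codom (R : comNzRingType) n (a : 'I_n -> R) k :
  elem_sym k (fun i : 'I_(size (codom a)) => (codom a)`_i) = elem_sym k a.
Proof.
have e : size (codom a) = n by rewrite size_codom card_ord.
have e' : size (codom a) = #|'I_n| by rewrite size_codom.
rewrite -(elem_sym_cast e); apply: eq_bigr => I _; apply: eq_bigr => i _.
rewrite /= (nth_codom 0 a (cast_ord e' i)) enum_val_ord cast_ord_comp.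
by congr a; apply: val_inj.
Qed.

Lemma coef_all_roots (R : fieldType) (p : {poly R}) (rs : seq R) k :
  size p = (size rs).+1 -> all (root p) rs -> uniq rs -> (k <= size rs)%N ->
  p`_(size rs - k) =
    lead_coef p * ((-1) ^+ k * elem_sym k (fun i : 'I_(size rs) => rs`_i)).
Proof.
move=> size_p rootsP uniq_rs le_k.
rewrite {1}(all_roots_prod_XsubC size_p rootsP) ?uniq_rootsE //.
by rewrite coefZ coef_prod_XsubC ?leq_subr // subKn.
Qed.

Lemma bin_second_diff N j :
  ('C(N.+2, j.+2) + 'C(N, j.+2) = 2 * 'C(N.+1, j.+2) + 'C(N, j))%N.
Proof. rewrite !binS; lia. Qed.

Lemma bin_add_pred_fact a b : (0 < a + b)%N ->
  (('C(a + b, a) + 'C((a + b).-1, a)) * (a`! * b`!) = (a + b.*2) * (a + b).-1`!)%N.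
Proof.
case: b => [|b] ab_gt0.
  rewrite addn0 in ab_gt0 *; case: a ab_gt0 => // a _.
  by rewrite binn bin_small // fact0 factS /=; lia.
have := @bin_fact (a + b.+1) a (leq_addr _ _).
have := @bin_fact (a + b) a (leq_addr _ _).
rewrite !addKn addnS !factS => fact_ab fact_abS.
rewrite mulnDl fact_abS.
have -> : ('C(a + b, a) * (a`! * (b.+1 * b`!)) = b.+1 * (a + b)`!)%N.
  by rewrite -fact_ab; ring.
by rewrite /= -mulnDl; congr (_ * _)%N; lia.
Qed.

Definition cos_odd_poly (R : nzRingType) m : {poly R} :=
  \poly_(j < m.+1) ((-4) ^+ j * ('C((m + j).-1, j.*2))%:R).

Lemma coef_cos_odd_poly (R : nzRingType) m j :
  (cos_odd_poly R m)`_j = (-4) ^+ j * ('C((m + j).-1, j.*2))%:R.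
Proof. by rewrite coef_poly; case: ltnP => // ?; rewrite bin_small ?mulr0 //; lia. Qed.

Lemma cos_odd_poly_small (R : nzRingType) m : (m <= 1)%N -> cos_odd_poly R m = 1.
Proof.
move=> le_m1; apply/polyP => -[|j]; rewrite coef_cos_odd_poly coefC //=.
  by rewrite bin0 mulr1.
by rewrite bin_small ?mulr0 //; lia.
Qed.

Lemma cos_odd_polySS (R : comNzRingType) m :
  cos_odd_poly R m.+2 =
    2 *: cos_odd_poly R m.+1 - 4 *: ('X * cos_odd_poly R m.+1) - cos_odd_poly R m.
Proof.
apply/polyP => -[|j]; rewrite !(coefB, coefZ, coefXM, coef_cos_odd_poly) /=.
  by rewrite !bin0; ring.
rewrite !addnS !addSn /=.
have binE := bin_second_diff (m + j) j.*2; rewrite -!doubleS in binE.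
have binR : ('C((m + j).+2, j.+1.*2))%:R = 2 * ('C((m + j).+1, j.+1.*2))%:R
    + ('C(m + j, j.*2))%:R - ('C(m + j, j.+1.*2))%:R :> R.
  by rewrite -natrM -natrD -binE natrD addrK.
by rewrite binR exprS; ring.
Qed.

Definition cos_even_poly (R : nzRingType) n : {poly R} :=
  cos_odd_poly R n.+1 + cos_odd_poly R n.

Lemma coef_cos_even_poly (R : nzRingType) n j :
  (cos_even_poly R n)`_j = (-4) ^+ j * ('C(n + j, j.*2) + 'C((n + j).-1, j.*2))%:R.
Proof. by rewrite coefD !coef_cos_odd_poly addSn -mulrDr natrD. Qed.

Lemma coef_cos_even_poly_deg (R : nzRingType) n : (0 < n)%N ->
  (cos_even_poly R n)`_n = (-4) ^+ n.
Proof.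
move=> n_gt0; rewrite coef_cos_even_poly addnn binn bin_small ?mulr1 //.
by rewrite prednK ?double_gt0.
Qed.

Lemma size_cos_even_poly (R : numDomainType) n : (0 < n)%N ->
  size (cos_even_poly R n) = n.+1.
Proof.
move=> n_gt0; apply/eqP; rewrite eqn_leq; apply/andP; split.
  apply/leq_sizeP => j lt_nj; rewrite coef_cos_even_poly !bin_small ?mulr0 //; lia.
rewrite ltnNge; apply/negP => /leq_sizeP/(_ n (leqnn n))/eqP.
by rewrite coef_cos_even_poly_deg // expf_eq0 oppr_eq0 pnatr_eq0 andbF.
Qed.

Lemma lead_coef_cos_even_poly (R : numDomainType) n : (0 < n)%N ->
  lead_coef (cos_even_poly R n) = (-4) ^+ n.
Proof.
by move=> n_gt0; rewrite lead_coefE size_cos_even_poly // coef_cos_even_poly_deg.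
Qed.

Lemma coef_cos_even_poly_fact (R : nzRingType) n k : (0 < n)%N -> (k <= n)%N ->
  (cos_even_poly R n)`_(n - k) * ((2 * n - 2 * k)`! * k`!)%:R
    = (-4) ^+ (n - k) * (2 * n * (2 * n - k - 1)`!)%:R.
Proof.
move=> n_gt0 le_kn; rewrite coef_cos_even_poly -mulrA -natrM; congr (_ * _%:R).
have -> : (n + (n - k) = (n - k).*2 + k)%N by lia.
have -> : (2 * n - 2 * k = (n - k).*2)%N by lia.
have -> : (2 * n - k - 1 = ((n - k).*2 + k).-1)%N by lia.
have -> : (2 * n = (n - k).*2 + k.*2)%N by lia.
by apply: bin_add_pred_fact; lia.
Qed.

Lemma elem_sym_cos_even_poly_roots (F : numFieldType) n (s : 'I_n -> F) k :
  (0 < n)%N -> injective s -> (forall i, root (cos_even_poly F n) (s i)) -> (k <= n)%N ->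
  elem_sym k s = (2 * n)%:R * (4%:R ^- k) * ((2 * n - k - 1)`!)%:R
                   / ((k`!)%:R * ((2 * n - 2 * k)`!)%:R).
Proof.
move=> n_gt0 s_inj s_root le_kn.
have s_roots : all (root (cos_even_poly F n)) (codom s).
  by apply/allP => _ /codomP [i ->].
have s_uniq : uniq (codom s) by apply/injectiveP.
have size_s : size (codom s) = n by rewrite size_codom card_ord.
have := coef_all_roots (k := k) _ s_roots s_uniq.
rewrite elem_sym_codom size_s size_cos_even_poly // lead_coef_cos_even_poly //.
move=> /(_ erefl le_kn) vieta; have := coef_cos_even_poly_fact F n_gt0 le_kn.
have split_n : (-4) ^+ n = (-4) ^+ (n - k) * (-4) ^+ k :> F by rewrite -exprD subnK.
have four_neq0 m : (-4) ^+ m != 0 :> F by rewrite expf_neq0 // oppr_eq0 pnatr_eq0.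
rewrite vieta split_n -!mulrA => /(mulfI (four_neq0 _)).
rewrite mulrA -exprMn mulrNN mulr1 !natrM => fact_eq.
have fact_neq0 m : (m`!)%:R != 0 :> F by rewrite pnatr_eq0 -lt0n fact_gt0.
have four_k_neq0 : 4 ^+ k != 0 :> F by rewrite expf_neq0 // pnatr_eq0.
apply: (mulfI four_k_neq0).
apply: (mulIf (mulf_neq0 (fact_neq0 (2 * n - 2 * k)%N) (fact_neq0 k))).
by rewrite -mulrA fact_eq; field; rewrite !fact_neq0 four_k_neq0.
Qed.

Section Trigonometry.
Variable R : realType.
Implicit Types x y : R.

Lemma cosD_add_cosB x y : cos (x + y) + cos (x - y) = 2 * cos x * cos y.
Proof. by rewrite cosD cosB; ring. Qed.

Lemma cos_odd_poly_sin2 m x :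
  (cos_odd_poly R m).[sin x ^+ 2] * cos x = cos ((2 * m)%:R * x - x).
Proof.
have cos_rec j : cos ((2 * j.+2)%:R * x - x) =
    2 * (1 - 2 * sin x ^+ 2) * cos ((2 * j.+1)%:R * x - x) - cos ((2 * j)%:R * x - x).
  have := cosD_add_cosB ((2 * j.+1)%:R * x - x) (x *+ 2).
  have -> : (2 * j.+1)%:R * x - x + x *+ 2 = (2 * j.+2)%:R * x - x by ring.
  have -> : (2 * j.+1)%:R * x - x - x *+ 2 = (2 * j)%:R * x - x by ring.
  move/(congr1 (fun t => t - cos ((2 * j)%:R * x - x))); rewrite addrK => ->.
  by rewrite cos_mulr2n cos2sin2; ring.
suff two_steps m' : (cos_odd_poly R m').[sin x ^+ 2] * cos x = cos ((2 * m')%:R * x - x)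
  /\ (cos_odd_poly R m'.+1).[sin x ^+ 2] * cos x = cos ((2 * m'.+1)%:R * x - x).
  by case: (two_steps m).
elim: m' => [|j [IHj IHjS]].
  rewrite !cos_odd_poly_small // hornerC !mul1r mul0r sub0r cosN.
  by split; congr cos; ring.
split => //; rewrite cos_odd_polySS cos_rec -IHj -IHjS (mulrC 'X).
by rewrite !(hornerD, hornerN, hornerZ, hornerMX); ring.
Qed.

Lemma root_cos_even_poly n x : cos x != 0 -> cos ((2 * n)%:R * x) = 0 ->
  root (cos_even_poly R n) (sin x ^+ 2).
Proof.
move=> cos_neq0 cos_2n; apply/rootP; apply: (mulIf cos_neq0).
rewrite mul0r hornerD mulrDl !cos_odd_poly_sin2.
have -> : (2 * n.+1)%:R * x - x = (2 * n)%:R * x + x by ring.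
by rewrite cosD_add_cosB cos_2n mulr0 mul0r.
Qed.

Lemma cos_pihalf_add_natpi (i : nat) : cos (pi / 2 + i%:R * pi) = 0 :> R.
Proof.
elim: i => [|i IHi]; first by rewrite mul0r addr0 cos_pihalf.
have -> : pi / 2 + i.+1%:R * pi = pi / 2 + i%:R * pi + pi :> R by ring.
by rewrite cosDpi IHi oppr0.
Qed.

Lemma sin2_inj : {in `[0, pi / 2] &, injective (fun x : R => sin x ^+ 2)}.
Proof.
have pi_gt0 := pi_gt0 R.
have in_halfpi x : x \in `[0, pi / 2] ->
    x \in `[- (pi / 2), pi / 2] /\ sin x \is Num.nneg.
  rewrite !in_itv /= nnegrE => /andP [x_ge0 x_le]; split.
    by apply/andP; split; lra.
  by apply: sin_ge0_pi; apply/andP; split; lra.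
move=> x y /in_halfpi [xI x_nneg] /in_halfpi [yI y_nneg] /pexpIrn eq_sin.
exact: sin_inj xI yI (eq_sin isT x_nneg y_nneg).
Qed.

Lemma odd_pi_div_bounds n (i : 'I_n) :
  0 < (2 * i + 1)%:R * (pi : R) / (4 * n)%:R < pi / 2.
Proof.
have n_gt0 : (0 < n)%N by case: n i => [[]|].
have t_gt0 : 0 < pi / (4 * n)%:R :> R by rewrite divr_gt0 ?pi_gt0 // ltr0n muln_gt0.
have -> : pi / 2 = (2 * n)%:R * (pi / (4 * n)%:R) :> R.
  by rewrite !natrM; field; rewrite pnatr_eq0 -lt0n.
rewrite -mulrA mulr_gt0 ?ltr_pM2r ?ltr_nat ?ltr0n //; have := ltn_ord i; lia.
Qed.

Lemma cos_mul_odd_pi_div n (i : nat) : (0 < n)%N ->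
  cos ((2 * n)%:R * ((2 * i + 1)%:R * pi / (4 * n)%:R)) = 0 :> R.
Proof.
move=> n_gt0; rewrite -[RHS](cos_pihalf_add_natpi i); congr cos.
by rewrite !natrM natrD natrM; field; rewrite pnatr_eq0 -lt0n.
Qed.

Lemma injective_sin2_odd_pi_div n :
  injective (fun i : 'I_n => sin ((2 * i + 1)%:R * pi / (4 * n)%:R) ^+ 2 :> R).
Proof.
have in_itv0 (i : 'I_n) : (2 * i + 1)%:R * pi / (4 * n)%:R \in `[0, pi / 2 : R].
  by rewrite in_itv /=; have /andP [? ?] := odd_pi_div_bounds i; apply/andP; split; lra.
move=> i j /(sin2_inj (in_itv0 i) (in_itv0 j)).
have n_gt0 : (0 < n)%N by case: n i {in_itv0 j} => [[]|].
have c_neq0 : (4 * n)%:R^-1 != 0 :> R by rewrite invr_eq0 pnatr_eq0 -lt0n muln_gt0.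
move=> /(mulIf c_neq0) /(mulIf (lt0r_neq0 (pi_gt0 R))) /eqP.
by rewrite eqr_nat => /eqP eq_ij; apply: ord_inj; lia.
Qed.

End Trigonometry.

Theorem mainTheorem6 (R : realType) (n k : nat) (hn : (0 < n)%N) (hk : (k <= n)%N) :
  elem_sym k (fun i : 'I_n => sin ((2 * i + 1)%:R * pi / (4 * n)%:R) ^+ 2)
  = (2 * n)%:R * (4%:R ^- k) * ((2 * n - k - 1)`!)%:R
      / ((k`!)%:R * ((2 * n - 2 * k)`!)%:R) :> R.
Proof.
apply: (elem_sym_cos_even_poly_roots hn _ _ hk).
  exact: injective_sin2_odd_pi_div.
move=> i; have /andP [angle_gt0 angle_lt] := odd_pi_div_bounds R i.
apply: root_cos_even_poly; last exact: cos_mul_odd_pi_div.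
apply/lt0r_neq0/cos_gt0_pihalf; rewrite angle_lt andbT (lt_trans _ angle_gt0) //.
by rewrite oppr_lt0 divr_gt0 ?pi_gt0.
Qed.
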